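(* Let $f=1$ and $n>0$. Then for every $c\in\left[\frac{1}{e^n}\left(\frac12+\frac n2+\frac{n^2}{12}\right),\frac12\right]$, the equation $c=\xi_{n,1}(\gamma)$ has a solution $\gamma\in[0,1]$.
   Context: Let $g(x,y)=1$ if $x>y$, $g(x,y)=1/2$ if $x=y$, and $g(x,y)=0$ if $x<y$. For $n>0$, $f\in\mathbb{N}$ and $\gamma\in[0,1]$, define $$\xi_{n,f}(\gamma)=\sum_{D=0}^\infty\sum_{V=0}^\infty \frac{(n\gamma)^D}{e^{n\gamma}D!}\frac{(n(1-\gamma))^V}{e^{n(1-\gamma)}V!}\Big[\sum_{h=0}^D\binom{D}{h}\Big(\tfrac{V+1}{V+1+f}\Big)^h\Big(\tfrac{f}{V+1+f}\Big)^{D-h}g(V+1+h,f+D-h)-\sum_{h=0}^{D+1}\binom{D+1}{h}\Big(\tfrac{V}{V+f}\Big)^h\Big(\tfrac{f}{V+f}\Big)^{D+1-h}g(V+h,f+D+1-h)\Big],$$ with the convention $0^0=1$. Interpretation: $\xi_{n,f}(\gamma)$ is the expected utility gain from voting rather than delegating for a well-behaving agent. The setting has Poisson$(n)$ well-behaving agents, each delegating with probability $\gamma$, and $f$ misbehaving voters who always vote. Delegated votes are assigned uniformly at random to the active voters. The equation $c=\xi_{n,f}(\gamma)$ is the equilibrium indifference condition for voting cost $c$. *)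

From Stdlib Require Import Reals.
From Coquelicot Require Import Coquelicot.
Open Scope R_scope.

Definition g (x y : nat) : R :=
  if Nat.ltb y x then 1 else if Nat.eqb x y then / 2 else 0.

(* Poisson(lam) probability mass at k:  lam^k / (e^lam k!)  (0^0 = 1 via pow) *)
Definition poisson (lam : R) (k : nat) : R :=
  lam ^ k / (exp lam * INR (Stdlib.Arith.Factorial.fact k)).

Definition bracket (f D V : nat) : R :=
  sum_f_R0 (fun h => Binomial.C D h
              * (INR (V + 1) / INR (V + 1 + f)) ^ h
              * (INR f / INR (V + 1 + f)) ^ (D - h)
              * g (V + 1 + h) (f + D - h)) D
  - sum_f_R0 (fun h => Binomial.C (D + 1) h
              * (INR V / INR (V + f)) ^ h
              * (INR f / INR (V + f)) ^ (D + 1 - h)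
              * g (V + h) (f + (D + 1) - h)) (D + 1).

Definition xi (n : R) (f : nat) (gamma : R) : R :=
  Series (fun D => Series (fun V =>
    poisson (n * gamma) D * poisson (n * (1 - gamma)) V * bracket f D V)).

(* The map gamma |-> xi n 1 gamma is continuous on [0, 1]: the bracket lies in
   [-1, 1] and, near [0, 1], each Poisson weight is dominated by a constant times a
   Poisson(2n) mass, so both series converge uniformly (Weierstrass M-test).
   At gamma = 0 only D = 0 contributes and the bracket vanishes for V >= 3, which gives
   the lower end e^-n (1/2 + n/2 + n^2/12); at gamma = 1 only V = 0 contributes and
   the symmetry g x y + g y x = 1 makes every bracket equal to 1/2. The intermediate
   value theorem concludes. *)

From Stdlib Require Import Reals Lra Lia Factorial.
From Coquelicot Require Import Coquelicot.
Open Scope R_scope.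

Lemma ex_series_Rabs_le (u M : nat -> R) :
  (forall k, Rabs (u k) <= M k) -> ex_series M -> ex_series u.
Proof.
  intros Hle HM. apply ex_series_Rabs.
  apply (@ex_series_le R_AbsRing R_CompleteNormedModule _ M); [|exact HM].
  intros k. change (Rabs (Rabs (u k)) <= M k). rewrite Rabs_Rabsolu. apply Hle.
Qed.

Lemma Series_Rabs_le (u M : nat -> R) :
  (forall k, Rabs (u k) <= M k) -> ex_series M -> Rabs (Series u) <= Series M.
Proof.
  intros Hle HM.
  assert (Habs : ex_series (fun k => Rabs (u k))).
  { apply (ex_series_Rabs_le _ M); [|exact HM]. intros k. rewrite Rabs_Rabsolu. apply Hle. }
  apply Rle_trans with (Series (fun k => Rabs (u k))); [now apply Series_Rabs|].
  apply Series_le; [|exact HM]. intros k. split; [apply Rabs_pos | apply Hle].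
Qed.

Lemma Series_tail_Rabs_le (u M : nat -> R) (N : nat) :
  (forall k, Rabs (u k) <= M k) -> ex_series M ->
  Rabs (Series u - sum_f_R0 u N) <= Series M - sum_f_R0 M N.
Proof.
  intros Hle HM.
  assert (Hu : ex_series u) by exact (ex_series_Rabs_le u M Hle HM).
  rewrite (Series_incr_n u (S N)), (Series_incr_n M (S N)) by (lia || assumption).
  simpl pred. rewrite !Rplus_minus_l.
  apply Series_Rabs_le; [intros k; apply Hle|].
  now apply (ex_series_incr_n M (S N)).
Qed.

Lemma continuity_pt_Series (u : nat -> R -> R) (M : nat -> R) (c : R) (r : posreal) :
  ex_series M ->
  (forall k x, Boule c r x -> Rabs (u k x) <= M k) ->
  (forall k x, Boule c r x -> continuity_pt (u k) x) ->
  forall x, Boule c r x -> continuity_pt (fun x => Series (fun k => u k x)) x.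
Proof.
  intros HM Hle Hcont.
  apply (CVU_continuity (fun N x => sum_f_R0 (fun k => u k x) N)).
  - intros eps Heps.
    assert (Hlim : is_lim_seq (sum_n M) (Series M)) by exact (Series_correct M HM).
    apply is_lim_seq_spec in Hlim.
    destruct (Hlim (mkposreal eps Heps)) as [N HN].
    exists N. intros m x Hm Hx.
    apply Rle_lt_trans with (Series M - sum_f_R0 M m).
    + apply Series_tail_Rabs_le; [intros k; now apply Hle | exact HM].
    + specialize (HN m Hm). simpl in HN. rewrite sum_n_Reals in HN.
      apply Rabs_def2 in HN. lra.
  - intros N x Hx. apply continuity_pt_finite_SF. intros k _. now apply Hcont.
Qed.

Lemma is_series_finite_support (a : nat -> R) (N : nat) :
  (forall k, (N < k)%nat -> a k = 0) -> is_series a (sum_f_R0 a N).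
Proof.
  intros Hzero.
  enough (H : is_lim_seq (sum_n a) (sum_f_R0 a N)) by exact H.
  apply (is_lim_seq_ext_loc (fun _ => sum_f_R0 a N)); [|apply is_lim_seq_const].
  exists N. intros m Hm. rewrite sum_n_Reals.
  induction Hm as [|m Hm IH]; [reflexivity|].
  rewrite tech5, <- IH, Hzero by lia. ring.
Qed.

Lemma is_series_scal_Rmult (c : R) (a : nat -> R) (l : R) :
  is_series a l -> is_series (fun k => c * a k) (c * l).
Proof. exact (@is_series_scal_l R_AbsRing R_NormedModule c a l). Qed.

Lemma is_series_exp (x : R) : is_series (fun k => x ^ k / INR (fact k)) (exp x).
Proof.
  apply (is_series_ext (fun k => scal (pow_n x k) (/ INR (fact k)))); [|exact (is_exp_Reals x)].
  intros k. rewrite pow_n_pow. reflexivity.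
Qed.

Lemma INR_fact_neq_0 (k : nat) : INR (fact k) <> 0.
Proof. apply not_0_INR, fact_neq_0. Qed.

Lemma is_series_poisson (l : R) : is_series (poisson l) 1.
Proof.
  rewrite <- (Rinv_l (exp l)) by apply Rgt_not_eq, exp_pos.
  apply (is_series_ext (fun k => / exp l * (l ^ k / INR (fact k)))).
  - intros k. simpl. unfold poisson. field.
    split; [apply INR_fact_neq_0 | apply Rgt_not_eq, exp_pos].
  - apply is_series_scal_Rmult, is_series_exp.
Qed.

Lemma poisson_0_0 : poisson 0 0 = 1.
Proof. unfold poisson. rewrite exp_0. simpl. field. Qed.

Lemma poisson_0_S (k : nat) : poisson 0 (S k) = 0.
Proof. unfold poisson. simpl. unfold Rdiv. ring. Qed.

Lemma Series_poisson_0 (u : nat -> R) : Series (fun k => poisson 0 k * u k) = u O.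
Proof.
  apply is_series_unique.
  replace (u O) with (sum_f_R0 (fun k => poisson 0 k * u k) 0)
    by (simpl; rewrite poisson_0_0; ring).
  apply is_series_finite_support.
  intros [|k] Hk; [lia|]. rewrite poisson_0_S. ring.
Qed.

Lemma Rabs_poisson_le (a l : R) (k : nat) :
  Rabs l <= a -> Rabs (poisson l k) <= exp (2 * a) * poisson a k.
Proof.
  intros Hl.
  assert (Hf : 0 < INR (fact k)) by apply INR_fact_lt_0.
  assert (Hpow : Rabs l ^ k <= a ^ k) by (apply pow_incr; split; [apply Rabs_pos | exact Hl]).
  assert (Hexp : / exp l <= exp a).
  { rewrite <- exp_Ropp. apply Rabs_le_between in Hl.
    destruct (Rle_lt_or_eq_dec (- l) a) as [Hlt | ->]; [lra | | lra].
    left. now apply exp_increasing. }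
  unfold poisson, Rdiv.
  rewrite Rabs_mult, <- RPow_abs, Rabs_inv, Rabs_mult,
    (Rabs_pos_eq (exp l)), (Rabs_pos_eq (INR (fact k))) by (left; auto using exp_pos).
  apply Rle_trans with (a ^ k * exp a * / INR (fact k)).
  - rewrite Rinv_mult, <- Rmult_assoc.
    apply Rmult_le_compat_r; [left; now apply Rinv_0_lt_compat|].
    apply Rmult_le_compat; auto using pow_le, Rabs_pos.
    left. apply Rinv_0_lt_compat, exp_pos.
  - right. replace (2 * a) with (a + a) by ring. rewrite exp_plus. field.
    split; [lra | apply Rgt_not_eq, exp_pos].
Qed.

Lemma g_bounds (x y : nat) : 0 <= g x y <= 1.
Proof. unfold g. destruct (Nat.ltb y x); [lra|]. destruct (Nat.eqb x y); lra. Qed.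

Lemma C_nonneg (D h : nat) : 0 <= Binomial.C D h.
Proof.
  unfold Binomial.C. apply Rdiv_le_0_compat; [apply pos_INR|].
  apply Rmult_lt_0_compat; apply INR_fact_lt_0.
Qed.

Lemma binomial_average_bounds (D : nat) (p q : R) (w : nat -> R) :
  0 <= p -> 0 <= q -> p + q = 1 -> (forall h, 0 <= w h <= 1) ->
  0 <= sum_f_R0 (fun h => Binomial.C D h * p ^ h * q ^ (D - h) * w h) D <= 1.
Proof.
  intros Hp Hq Hpq Hw.
  assert (Hweight : forall h, 0 <= Binomial.C D h * p ^ h * q ^ (D - h))
    by (intros h; apply Rmult_le_pos; [apply Rmult_le_pos|]; auto using C_nonneg, pow_le).
  split.
  - apply cond_pos_sum. intros h. apply Rmult_le_pos; [apply Hweight | apply Hw].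
  - rewrite <- (pow1 D), <- Hpq, binomial.
    apply sum_Rle. intros h _.
    rewrite <- (Rmult_1_r (Binomial.C D h * p ^ h * q ^ (D - h))) at 2.
    apply Rmult_le_compat_l; [apply Hweight | apply Hw].
Qed.

Lemma Rabs_bracket_le (f D V : nat) : (0 < f)%nat -> Rabs (bracket f D V) <= 1.
Proof.
  intros Hf. apply lt_0_INR in Hf.
  assert (HV := pos_INR V).
  assert (HV1 : INR (V + 1) = INR V + 1) by (rewrite plus_INR; reflexivity).
  assert (HV1f : INR (V + 1 + f) = INR V + 1 + INR f) by (rewrite !plus_INR; reflexivity).
  assert (HVf : INR (V + f) = INR V + INR f) by apply plus_INR.
  destruct (binomial_average_bounds D (INR (V + 1) / INR (V + 1 + f)) (INR f / INR (V + 1 + f))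
              (fun h => g (V + 1 + h) (f + D - h))) as [Hfirst0 Hfirst1];
    [ rewrite HV1, HV1f; apply Rdiv_le_0_compat; lra
    | rewrite HV1f; apply Rdiv_le_0_compat; lra
    | rewrite HV1, HV1f; field; lra
    | intros; apply g_bounds | ].
  destruct (binomial_average_bounds (D + 1) (INR V / INR (V + f)) (INR f / INR (V + f))
              (fun h => g (V + h) (f + (D + 1) - h))) as [Hsecond0 Hsecond1];
    [ rewrite HVf; apply Rdiv_le_0_compat; lra
    | rewrite HVf; apply Rdiv_le_0_compat; lra
    | rewrite HVf; field; lra
    | intros; apply g_bounds | ].
  unfold bracket. apply Rabs_le. lra.
Qed.

Definition xi_term (n : R) (f D V : nat) (gamma : R) : R :=
  poisson (n * gamma) D * poisson (n * (1 - gamma)) V * bracket f D V.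

Lemma continuity_xi_term (n : R) (f D V : nat) (x : R) : continuity_pt (xi_term n f D V) x.
Proof.
  apply continuity_pt_filterlim, (@ex_derive_continuous R_AbsRing R_NormedModule).
  unfold xi_term, poisson. auto_derive.
  repeat split; apply Rgt_not_eq, Rmult_lt_0_compat; auto using exp_pos, INR_fact_lt_0.
Qed.

Section Domination.

Variables (n : R) (f : nat).
Hypotheses (Hn : 0 <= n) (Hf : (0 < f)%nat).

(* On the ball |gamma - 1/2| < 1 both Poisson parameters have modulus at most 2n. *)
Let ball := Boule (1 / 2) (mkposreal 1 Rlt_0_1).
Let majorant (k : nat) : R := exp (4 * n) * poisson (2 * n) k.

Lemma is_series_majorant : is_series majorant (exp (4 * n)).
Proof.
  rewrite <- (Rmult_1_r (exp (4 * n))). apply is_series_scal_Rmult, is_series_poisson.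
Qed.

Lemma Rabs_xi_term_le (D V : nat) (x : R) :
  ball x -> Rabs (xi_term n f D V x) <= majorant D * majorant V.
Proof.
  unfold ball, Boule. simpl. intros Hx. apply Rabs_def2 in Hx.
  assert (Hmaj : forall l k, Rabs l <= 2 * n -> Rabs (poisson l k) <= majorant k).
  { intros l k Hl. unfold majorant. replace (4 * n) with (2 * (2 * n)) by ring.
    now apply Rabs_poisson_le. }
  unfold xi_term. rewrite !Rabs_mult, <- (Rmult_1_r (majorant D * majorant V)).
  apply Rmult_le_compat; auto using Rmult_le_pos, Rabs_pos, Rabs_bracket_le.
  apply Rmult_le_compat; auto using Rabs_pos; apply Hmaj;
    apply Rabs_le; split; nra.
Qed.

Lemma Rabs_Series_xi_term_le (D : nat) (x : R) :
  ball x -> Rabs (Series (fun V => xi_term n f D V x)) <= majorant D * exp (4 * n).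
Proof.
  intros Hx.
  assert (Hdom : is_series (fun V => majorant D * majorant V) (majorant D * exp (4 * n)))
    by apply is_series_scal_Rmult, is_series_majorant.
  rewrite <- (is_series_unique _ _ Hdom).
  apply Series_Rabs_le; [intros V; now apply Rabs_xi_term_le | now exists (majorant D * exp (4 * n))].
Qed.

Lemma continuity_Series_xi_term (D : nat) (x : R) :
  ball x -> continuity_pt (fun x => Series (fun V => xi_term n f D V x)) x.
Proof.
  apply (continuity_pt_Series _ (fun V => majorant D * majorant V)).
  - exists (majorant D * exp (4 * n)). apply is_series_scal_Rmult, is_series_majorant.
  - intros V y Hy. now apply Rabs_xi_term_le.
  - intros V y _. apply continuity_xi_term.
Qed.

Lemma continuity_xi (x : R) : 0 <= x <= 1 -> continuity_pt (xi n f) x.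
Proof.
  intros Hx.
  apply (continuity_pt_Series (fun D x => Series (fun V => xi_term n f D V x))
           (fun D => majorant D * exp (4 * n)) (1 / 2) (mkposreal 1 Rlt_0_1)).
  - exists (exp (4 * n) * exp (4 * n)).
    apply (is_series_ext (fun D => exp (4 * n) * majorant D)); [intros D; apply Rmult_comm|].
    apply is_series_scal_Rmult, is_series_majorant.
  - intros D y Hy. now apply Rabs_Series_xi_term_le.
  - intros D y Hy. now apply continuity_Series_xi_term.
  - unfold Boule. simpl. apply Rabs_def1; lra.
Qed.

End Domination.

Lemma xi_at_0 (n : R) (f : nat) : xi n f 0 = Series (fun V => poisson n V * bracket f 0 V).
Proof.
  unfold xi. rewrite Rmult_0_r, Rminus_0_r, Rmult_1_r.
  rewrite (Series_ext _ (fun D => poisson 0 D * Series (fun V => poisson n V * bracket f D V))).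
  - apply Series_poisson_0.
  - intros D. rewrite <- Series_scal_l. apply Series_ext. intros V. ring.
Qed.

Lemma xi_at_1 (n : R) (f : nat) : xi n f 1 = Series (fun D => poisson n D * bracket f D 0).
Proof.
  unfold xi. rewrite Rmult_1_r, Rminus_diag, Rmult_0_r.
  apply Series_ext. intros D.
  rewrite (Series_ext _ (fun V => poisson 0 V * (poisson n D * bracket f D V))) by (intros; ring).
  apply Series_poisson_0.
Qed.

Lemma g_gt (x y : nat) : (y < x)%nat -> g x y = 1.
Proof. intros Hxy. unfold g. apply Nat.ltb_lt in Hxy. now rewrite Hxy. Qed.

Lemma g_lt (x y : nat) : (x < y)%nat -> g x y = 0.
Proof.
  intros Hxy. unfold g.
  rewrite (proj2 (Nat.ltb_ge y x)), (proj2 (Nat.eqb_neq x y)) by lia. reflexivity.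
Qed.

Lemma g_add_swap (x y : nat) : g x y + g y x = 1.
Proof.
  unfold g. destruct (Nat.ltb_spec y x), (Nat.ltb_spec x y), (Nat.eqb_spec x y),
    (Nat.eqb_spec y x); try lia; lra.
Qed.

Lemma bracket_1_0_0 : bracket 1 0 0 = / 2.
Proof. unfold bracket, g, Binomial.C. simpl. field. Qed.

Lemma bracket_1_0_1 : bracket 1 0 1 = / 2.
Proof. unfold bracket, g, Binomial.C. simpl. field. Qed.

Lemma bracket_1_0_2 : bracket 1 0 2 = / 6.
Proof. unfold bracket, g, Binomial.C. simpl. field. Qed.

Lemma bracket_1_0_gt2 (V : nat) : (2 < V)%nat -> bracket 1 0 V = 0.
Proof.
  intros HV. unfold bracket. simpl sum_f_R0.
  rewrite !C_n_0, C_n_n.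
  rewrite (g_gt (V + 1 + 0)), (g_gt (V + 0)), (g_gt (V + 1)) by lia.
  rewrite !plus_INR. simpl. assert (HV0 := pos_INR V). field. lra.
Qed.

Lemma xi_1_0 (n : R) : xi n 1 0 = / exp n * (1 / 2 + n / 2 + n ^ 2 / 12).
Proof.
  rewrite xi_at_0. apply is_series_unique.
  replace (/ exp n * (1 / 2 + n / 2 + n ^ 2 / 12))
    with (sum_f_R0 (fun V => poisson n V * bracket 1 0 V) 2).
  - apply is_series_finite_support. intros V HV. rewrite bracket_1_0_gt2 by exact HV. ring.
  - simpl. rewrite bracket_1_0_0, bracket_1_0_1, bracket_1_0_2. unfold poisson. simpl.
    field. apply Rgt_not_eq, exp_pos.
Qed.

(* Pairing h with D - h turns the sum into half of sum_h C(D,h) = 2^D, by g_add_swap. *)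
Lemma sum_binomial_g_half (D : nat) :
  sum_f_R0 (fun h => Binomial.C D h * g (S h) (S D - h)) D = 2 ^ D / 2.
Proof.
  set (s := sum_f_R0 _ D).
  assert (Hrev : s = sum_f_R0 (fun h => Binomial.C D h * g (S D - h) (S h)) D).
  { unfold s. rewrite <- sum_f_R0_skip. apply sum_eq. intros h Hh.
    rewrite <- pascal_step1 by lia. do 2 f_equal; lia. }
  assert (Hpow : 2 ^ D = sum_f_R0 (Binomial.C D) D).
  { replace 2 with (1 + 1) by ring. rewrite binomial.
    apply sum_eq. intros h _. rewrite !pow1. ring. }
  assert (Hdouble : s + s = 2 ^ D).
  { rewrite Hpow. unfold s at 1. rewrite Hrev, <- plus_sum. apply sum_eq. intros h _.
    rewrite <- Rmult_plus_distr_l, g_add_swap. ring. }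
  lra.
Qed.

Lemma bracket_1_D_0 (D : nat) : bracket 1 D 0 = / 2.
Proof.
  unfold bracket.
  rewrite (sum_eq_R0 (fun h => _ * g (0 + h) (1 + (D + 1) - h))).
  2:{ intros [|h] _.
      - rewrite (g_lt (0 + 0)) by lia. ring.
      - simpl INR. unfold Rdiv. rewrite Rmult_0_l. simpl. ring. }
  rewrite (sum_eq _ (fun h => Binomial.C D h * g (S h) (S D - h) * (/ 2) ^ D)).
  - rewrite <- scal_sum, sum_binomial_g_half, pow_inv. field. apply pow_nonzero. lra.
  - intros h Hh.
    replace (0 + 1 + h)%nat with (S h) by lia.
    replace (1 + D - h)%nat with (S D - h)%nat by lia.
    replace (INR (0 + 1 + 1)) with 2 by (simpl; ring).
    replace (INR (0 + 1)) with 1 by (simpl; ring).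
    replace ((/ 2) ^ D) with ((1 / 2) ^ h * (1 / 2) ^ (D - h))
      by (rewrite <- pow_add, Nat.add_comm, Nat.sub_add by exact Hh; f_equal; field).
    simpl INR. ring.
Qed.

Lemma xi_1_1 (n : R) : xi n 1 1 = 1 / 2.
Proof.
  rewrite xi_at_1. apply is_series_unique.
  apply (is_series_ext (fun D => / 2 * poisson n D)).
  - intros D. rewrite bracket_1_D_0. apply Rmult_comm.
  - replace (1 / 2) with (/ 2 * 1) by field. apply is_series_scal_Rmult, is_series_poisson.
Qed.

Lemma IVT_interv_le (h : R -> R) (a b y : R) :
  (forall x, a <= x <= b -> continuity_pt h x) -> a <= b -> h a <= y <= h b ->
  exists x, a <= x <= b /\ h x = y.
Proof.
  intros Hcont Hab [Hay Hyb].
  destruct (Req_dec (h a) y) as [<- | Ha]; [exists a; split; [lra | reflexivity]|].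
  destruct (Req_dec (h b) y) as [<- | Hb]; [exists b; split; [lra | reflexivity]|].
  assert (Hlt : a < b) by (destruct (Rle_lt_or_eq_dec a b Hab) as [| <-]; lra).
  destruct (Ranalysis5.IVT_interv (fun x => h x - y) a b) as [x [Hx Hhx]]; try lra.
  - intros x Hx. apply continuity_pt_minus; [now apply Hcont | apply continuity_pt_const].
    intros u v. reflexivity.
  - exists x. split; [exact Hx | lra].
Qed.

Theorem proposition2 (n : R) (hn : 0 < n) (c : R)
  (hc1 : / exp n * (1 / 2 + n / 2 + n ^ 2 / 12) <= c) (hc2 : c <= 1 / 2) :
  exists gamma : R, 0 <= gamma <= 1 /\ c = xi n 1 gamma.
Proof.
  rewrite <- xi_1_0 in hc1. rewrite <- (xi_1_1 n) in hc2.
  destruct (IVT_interv_le (xi n 1) 0 1 c) as [gamma [Hgamma Hxi]].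
  - intros x Hx. apply continuity_xi; [lra | lia | exact Hx].
  - lra.
  - split; assumption.
  - exists gamma. split; [exact Hgamma | now rewrite Hxi].
Qed.
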